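(* Let $\mathfrak{L}$ be a class of groups closed under finite index subgroups, let $I:\mathfrak{L}\to\mathbb{R}$ be an invariant, and let $G\in\mathfrak{L}$. Define \[\tilde{I}(G)=\inf_{H\leqslant_f G}\frac{I(H)}{|G:H|},\qquad \tilde{J}(G)=\inf_{H\trianglelefteq_f G}\frac{I(H)}{|G:H|},\] where the first infimum is over all finite index subgroups $H$ of $G$ and the second over all finite index normal subgroups of $G$. If $I$ is submultiplicative with respect to finite index subgroups, then $\tilde{I}(G)=\tilde{J}(G)$. If $I$ is submultiplicative with respect to finite index normal subgroups, then $\tilde{I}(G)=\tilde{J}(G)$.
   Context: $I$ is submultiplicative with respect to finite index (resp. finite index normal) subgroups if $\frac{I(H)}{|G:H|}\le I(G)$ for every $G\in\mathfrak{L}$ and every finite index (resp. finite index normal) subgroup $H$ of $G$. $\mathfrak{L}$ closed under finite index subgroups means that if $G\in\mathfrak{L}$ and $H$ has finite index in $G$ then $H\in\mathfrak{L}$. *)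

(* Abstract (possibly infinite) groups are
   given by an explicit record, since MathComp only handles finite groups. *)
From HB Require Import structures.
From mathcomp Require Import all_boot all_order all_algebra.
From mathcomp Require Import boolp classical_sets reals constructive_ereal ereal.
From Stdlib Require Import ProofIrrelevance.
Set Implicit Arguments. Unset Strict Implicit. Unset Printing Implicit Defensive.
Import Order.TTheory GRing.Theory Num.Theory.

Record grp := Grp {
  gcar :> Type;
  gmul : gcar -> gcar -> gcar;
  gone : gcar;
  ginv : gcar -> gcar;
  gmulA : forall x y z, gmul x (gmul y z) = gmul (gmul x y) z;
  gmul1l : forall x, gmul gone x = x;
  gmul1r : forall x, gmul x gone = x;
  gmulVl : forall x, gmul (ginv x) x = gone;
  gmulVr : forall x, gmul x (ginv x) = gone }.

Definition is_subgroup (G : grp) (S : G -> Prop) : Prop :=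
  [/\ S (gone G),
      (forall x y, S x -> S y -> S (gmul x y)) &
      (forall x, S x -> S (ginv x))].

Record subgroup (G : grp) := Subgroup {
  sg_pred :> G -> Prop;
  sg_prop : is_subgroup sg_pred }.

Definition is_normal (G : grp) (H : subgroup G) : Prop :=
  forall g x, H x -> H (gmul (gmul g x) (ginv g)).

(* has_index H n : |G : H| = n, witnessed by a left transversal of size n:
   every g lies in exactly one left coset r_i H. *)
Definition has_index (G : grp) (H : subgroup G) (n : nat) : Prop :=
  exists r : 'I_n -> G, forall g, exists! i, H (gmul (ginv (r i)) g).

Section SubGrp.
Variables (G : grp) (H : subgroup G).
Let T := {x : G | H x}.
Let HP := sg_prop H.
Definition sub_mul (x y : T) : T :=
  exist _ (gmul (proj1_sig x) (proj1_sig y))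
    (let: And3 _ hm _ := HP in hm _ _ (proj2_sig x) (proj2_sig y)).
Definition sub_one : T := exist _ (gone G) (let: And3 h1 _ _ := HP in h1).
Definition sub_inv (x : T) : T :=
  exist _ (ginv (proj1_sig x)) (let: And3 _ _ hi := HP in hi _ (proj2_sig x)).
Let eqT (x y : T) : proj1_sig x = proj1_sig y -> x = y.
Proof. case: x => x px; case: y => y py /= e; subst y; by rewrite (proof_irrelevance _ px py). Qed.
Lemma sub_mulA x y z : sub_mul x (sub_mul y z) = sub_mul (sub_mul x y) z.
Proof. apply: eqT; exact: gmulA. Qed.
Lemma sub_mul1l x : sub_mul sub_one x = x.
Proof. apply: eqT; exact: gmul1l. Qed.
Lemma sub_mul1r x : sub_mul x sub_one = x.
Proof. apply: eqT; exact: gmul1r. Qed.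
Lemma sub_mulVl x : sub_mul (sub_inv x) x = sub_one.
Proof. apply: eqT; exact: gmulVl. Qed.
Lemma sub_mulVr x : sub_mul x (sub_inv x) = sub_one.
Proof. apply: eqT; exact: gmulVr. Qed.
Definition sub_grp : grp :=
  Grp sub_mulA sub_mul1l sub_mul1r sub_mulVl sub_mulVr.
End SubGrp.

Definition grp_iso (G1 G2 : grp) : Prop :=
  exists f : G1 -> G2, bijective f /\ forall x y, f (gmul x y) = gmul (f x) (f y).

Definition closed_fi (L : grp -> Prop) : Prop :=
  forall (G : grp) (H : subgroup G) (n : nat),
    L G -> has_index H n -> L (sub_grp H).

Definition is_invariant (R : realType) (L : grp -> Prop) (I : grp -> R) : Prop :=
  forall G1 G2 : grp, L G1 -> L G2 -> grp_iso G1 G2 -> I G1 = I G2.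

Local Open Scope ring_scope.

Definition submult_fi (R : realType) (L : grp -> Prop) (I : grp -> R) : Prop :=
  forall (G : grp) (H : subgroup G) (n : nat),
    L G -> has_index H n -> I (sub_grp H) / n%:R <= I G.

Definition submult_fi_normal (R : realType) (L : grp -> Prop) (I : grp -> R) : Prop :=
  forall (G : grp) (H : subgroup G) (n : nat),
    L G -> is_normal H -> has_index H n -> I (sub_grp H) / n%:R <= I G.

Local Open Scope classical_set_scope.

Definition I_tilde (R : realType) (I : grp -> R) (G : grp) : \bar R :=
  ereal_inf [set x : \bar R | exists (H : subgroup G) (n : nat),
                 has_index H n /\ x = ((I (sub_grp H) / n%:R)%R)%:E].

Definition J_tilde (R : realType) (I : grp -> R) (G : grp) : \bar R :=
  ereal_inf [set x : \bar R | exists (H : subgroup G) (n : nat),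
                 is_normal H /\ has_index H n /\ x = ((I (sub_grp H) / n%:R)%R)%:E].

From mathcomp Require Import all_boot all_order all_algebra.
From mathcomp Require Import boolp classical_sets reals constructive_ereal ereal.
From Stdlib Require Import ProofIrrelevance.
Set Implicit Arguments. Unset Strict Implicit. Unset Printing Implicit Defensive.
Import Order.TTheory GRing.Theory Num.Theory.

(* Every finite index subgroup H contains its normal core N, which has finite
   index because G acts on the n cosets of H with kernel N.  Viewed inside H,
   N is a normal subgroup of some finite index m, and |G : N| = n m.  Normal
   submultiplicativity in H gives I(N)/(n m) <= I(H)/n, so the normal
   subgroups already realise the infimum over all finite index subgroups. *)

Section GroupTheory.
Variable G : grp.
Implicit Types x y : G.

Lemma mulKg x y : gmul (ginv x) (gmul x y) = y.
Proof. by rewrite gmulA gmulVl gmul1l. Qed.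

Lemma mulVKg x y : gmul x (gmul (ginv x) y) = y.
Proof. by rewrite gmulA gmulVr gmul1l. Qed.

Lemma ginv_unique x y : gmul x y = gone G -> ginv x = y.
Proof. by move=> e; rewrite -[ginv x]gmul1r -e mulKg. Qed.

Lemma ginvK x : ginv (ginv x) = x.
Proof. exact/ginv_unique/gmulVl. Qed.

Lemma ginvM x y : ginv (gmul x y) = gmul (ginv y) (ginv x).
Proof. by apply: ginv_unique; rewrite -gmulA mulVKg gmulVr. Qed.

Lemma ginv1 : ginv (gone G) = gone G.
Proof. exact/ginv_unique/gmul1l. Qed.

Variable H : subgroup G.

Lemma subgroup1 : H (gone G). Proof. by case: (sg_prop H). Qed.

Lemma subgroupM x y : H x -> H y -> H (gmul x y).
Proof. by case: (sg_prop H) => _ hM _; apply: hM. Qed.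

Lemma subgroupV x : H x -> H (ginv x).
Proof. by case: (sg_prop H) => _ _ hV; apply: hV. Qed.

End GroupTheory.

Lemma sig_eq (A : Type) (P : A -> Prop) (x y : {a | P a}) :
  proj1_sig x = proj1_sig y -> x = y.
Proof.
case: x => x px; case: y => y py /= e; subst y.
by rewrite (proof_irrelevance _ px py).
Qed.

Lemma has_index_of_coset_classifier (K : grp) (M : subgroup K) (F : finType)
    (f : K -> F) :
  (forall x y, f x = f y <-> M (gmul (ginv x) y)) -> exists m, has_index M m.
Proof.
move=> hf; pose A := [set a : F | `[< exists x, f x = a >]].
have reprP (i : 'I_#|A|) : exists x, f x = enum_val i.
  by have := enum_valP i; rewrite inE => /asboolP.
exists #|A|, (fun i => proj1_sig (cid (reprP i))) => g.
have Ag : f g \in A by rewrite inE; apply/asboolP; exists g.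
exists (enum_rank_in Ag (f g)); split.
  by apply/hf; case: cid => x /= ->; rewrite enum_rankK_in.
move=> j; case: cid => x /= fx /hf; rewrite fx => e.
by apply: enum_val_inj; rewrite e enum_rankK_in.
Qed.

Lemma ord_mul_bijection n m : exists e : 'I_(n * m) -> 'I_n * 'I_m,
  injective e /\ forall p, exists k, e k = p.
Proof.
exists (fun k => enum_val (cast_ord (esym (mxvec_cast n m)) k)); split.
  by move=> k k' /enum_val_inj /cast_ord_inj.
move=> p; exists (cast_ord (mxvec_cast n m) (enum_rank p)).
by rewrite cast_ordK enum_rankK.
Qed.

Section NormalCore.
Variables (G : grp) (H : subgroup G) (n : nat) (r : 'I_n -> G).
Hypothesis r_transversal : forall g, exists! i, H (gmul (ginv (r i)) g).

Definition coset_index (g : G) : 'I_n := proj1_sig (cid (r_transversal g)).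

Lemma coset_indexP g : H (gmul (ginv (r (coset_index g))) g).
Proof. by rewrite /coset_index; case: cid => i []. Qed.

Lemma coset_index_unique g j : H (gmul (ginv (r j)) g) -> coset_index g = j.
Proof. by rewrite /coset_index; case: cid => i [] /= _; apply. Qed.

Lemma coset_index_eq a b : coset_index a = coset_index b <-> H (gmul (ginv a) b).
Proof.
split=> [e | hab].
  have := subgroupM (subgroupV (coset_indexP a)) (coset_indexP b).
  by rewrite -e ginvM ginvK -gmulA mulVKg.
apply/esym/coset_index_unique.
by have := subgroupM (coset_indexP a) hab; rewrite -gmulA mulVKg.
Qed.

Definition in_core (x : G) : Prop := forall g, H (gmul (gmul (ginv g) x) g).

Lemma core_is_subgroup : is_subgroup in_core.
Proof.
split.
- by move=> g; rewrite gmul1r gmulVl; apply: subgroup1.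
- by move=> x y hx hy g; have := subgroupM (hx g) (hy g); rewrite -!gmulA mulVKg.
- by move=> x hx g; have := subgroupV (hx g); rewrite !ginvM ginvK -!gmulA.
Qed.

Definition core : subgroup G := Subgroup core_is_subgroup.

Lemma core_normal : is_normal core.
Proof.
move=> g x hx h /=; have := hx (gmul (ginv g) h).
by rewrite ginvM ginvK -!gmulA.
Qed.

Lemma in_core_sub x : in_core x -> H x.
Proof. by move=> /(_ (gone G)); rewrite ginv1 gmul1l gmul1r. Qed.

(* The core is the kernel of the action of G on the cosets r_i H. *)
Lemma coset_action_eq a b :
  (forall i, coset_index (gmul a (r i)) = coset_index (gmul b (r i))) <->
  in_core (gmul (ginv a) b).
Proof.
split=> [e g | hab i].
  set z := gmul (ginv a) b.
  have hz : H (gmul (gmul (ginv (r (coset_index g))) z) (r (coset_index g))).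
    by have := (coset_index_eq _ _).1 (e (coset_index g)); rewrite ginvM -!gmulA.
  have := subgroupM (subgroupM (subgroupV (coset_indexP g)) hz) (coset_indexP g).
  by rewrite ginvM ginvK -!gmulA !mulVKg.
by apply/coset_index_eq; have := hab (r i); rewrite ginvM -!gmulA.
Qed.

Lemma core_in_is_subgroup :
  is_subgroup (fun x : sub_grp H => in_core (proj1_sig x)).
Proof.
by case: core_is_subgroup => h1 hM hV; split=> // [x y|x]; [apply: hM | apply: hV].
Qed.

Definition core_in : subgroup (sub_grp H) := Subgroup core_in_is_subgroup.

Lemma core_in_normal : is_normal core_in.
Proof. by move=> g x; apply: (core_normal (proj1_sig g)). Qed.

Lemma core_in_finite_index : exists m, has_index core_in m.
Proof.
apply: (@has_index_of_coset_classifier _ _ _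
  (fun h : sub_grp H => [ffun i => coset_index (gmul (proj1_sig h) (r i))])).
move=> x y /=; rewrite -coset_action_eq; split=> [/ffunP e i | e].
  by have := e i; rewrite !ffunE.
by apply/ffunP => i; rewrite !ffunE.
Qed.

(* Transversal of the core: products r_i s_j with s a transversal of core_in. *)
Lemma core_index m : has_index core_in m -> has_index core (n * m).
Proof.
move=> [s s_transversal]; have [e [e_inj e_surj]] := ord_mul_bijection n m.
exists (fun k => gmul (r (e k).1) (proj1_sig (s (e k).2))) => g.
pose h : sub_grp H := exist _ (gmul (ginv (r (coset_index g))) g) (coset_indexP g).
have [j [hj j_unique]] := s_transversal h.
have [k ek] := e_surj (coset_index g, j).
exists k; split=> [|k' hk'].
  by rewrite ek /=; move: hj => /=; rewrite ginvM -gmulA.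
apply: e_inj; rewrite ek; case E: (e k') hk' => [i' j'] /= hk'.
have ri' : coset_index g = i'.
  apply: coset_index_unique.
  have := subgroupM (proj2_sig (s j')) (in_core_sub hk').
  by rewrite ginvM -!gmulA mulVKg.
subst i'.
by congr pair; apply: j_unique => /=; move: hk'; rewrite ginvM -gmulA.
Qed.

Lemma core_in_iso_core : grp_iso (sub_grp core_in) (sub_grp core).
Proof.
pose f (x : sub_grp core_in) : sub_grp core :=
  exist _ (proj1_sig (proj1_sig x)) (proj2_sig x).
pose g (x : sub_grp core) : sub_grp core_in :=
  exist (fun y : sub_grp H => in_core (proj1_sig y))
    (exist _ (proj1_sig x) (in_core_sub (proj2_sig x))) (proj2_sig x).
exists f; split; last by move=> x y; apply: sig_eq.
by exists g => x; apply: sig_eq => //; apply: sig_eq.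
Qed.

End NormalCore.

Section Infimum.
Variables (R : realType) (L : grp -> Prop) (I : grp -> R).
Hypotheses (hL : closed_fi L) (hI : is_invariant L I) (hIn : submult_fi_normal L I).

Lemma normal_subgroup_below (G : grp) (H : subgroup G) n :
  L G -> has_index H n ->
  exists (N : subgroup G) (k : nat), [/\ is_normal N, has_index N k &
    (I (sub_grp N) / k%:R <= I (sub_grp H) / n%:R)%R].
Proof.
move=> LG hH; have [r r_transversal] := hH.
have [m hm] := core_in_finite_index r_transversal.
have hN := core_index r_transversal hm.
exists (core H), (n * m)%N; split => //; first exact: core_normal.
have LH := hL LG hH.
rewrite -(hI (hL LH hm) (hL LG hN) (core_in_iso_core H)).
rewrite natrM invfM [(n%:R^-1 * _)%R]mulrC mulrA.
by apply: ler_wpM2r; [rewrite invr_ge0 ler0n | exact: hIn LH (@core_in_normal _ H) hm].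
Qed.

Lemma I_tilde_eq_J_tilde (G : grp) : L G -> I_tilde I G = J_tilde I G.
Proof.
move=> LG; apply/le_anti/andP; split.
  by apply: ereal_inf_le_tmp => _ [H [k [_ [hk ->]]]]; exists H, k.
apply: le_ereal_inf_tmp => _ [H [k [hk ->]]].
have [N [k' [nN hN le]]] := normal_subgroup_below LG hk.
apply: ge_ereal_inf; exists ((I (sub_grp N) / k'%:R)%R)%:E; first by exists N, k'.
by rewrite lee_fin.
Qed.

End Infimum.

Lemma submult_fi_normal_of_submult_fi (R : realType) (L : grp -> Prop)
    (I : grp -> R) :
  submult_fi L I -> submult_fi_normal L I.
Proof. by move=> hs K M m LK _; apply: hs. Qed.

Theorem mainTheorem1 (R : realType) (L : grp -> Prop) (I : grp -> R)
  (hL : closed_fi L) (hI : is_invariant L I) (G : grp) (hG : L G) :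
  (submult_fi L I -> I_tilde I G = J_tilde I G) /\
  (submult_fi_normal L I -> I_tilde I G = J_tilde I G).
Proof.
split=> [/submult_fi_normal_of_submult_fi|] hs; exact: I_tilde_eq_J_tilde hs G hG.
Qed.
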